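(* Let $(X,G)$ be a minimal topological dynamical system. Then: (1) If $\pi_{eq}$ is open, then $\mathcal X_{eq}^{\mathrm{meas}}=\{\pi_{eq}^{-1}(y):y\in X_{eq}\}$. (2) If $\pi_{eq}$ is regular one to one, then $|E|=1$ for every $E\in\mathcal X_{eq}^{\mathrm{meas}}$. (3) If $\pi_{eq}$ is regular $K$ to one, then $|E|\le K$ for every $E\in\mathcal X_{eq}^{\mathrm{meas}}$.
   Context: $G$ is an infinite countable discrete group; a tds $(X,G)$ is a compact metric space with a $G$-action by homeomorphisms; minimal means no proper nonempty closed invariant subset. $\pi_{eq}:X\to X_{eq}$ is the factor map onto the maximal equicontinuous factor, $\nu_{eq}$ the unique invariant probability measure of $(X_{eq},G)$; $\pi_{eq}$ is regular $K$ to one if $\nu_{eq}(\{y:|\pi_{eq}^{-1}(y)|=K\})=1$. $2^X$ is the space of nonempty closed subsets with the Hausdorff metric $d_H$. $\mathcal X=\overline{\{\pi_{eq}^{-1}(y):y\in X_{eq}\}}\subset 2^X$; for $E\in\mathcal X$, $\pi_{\mathcal X}(E)$ is the single point $\pi_{eq}(E)$. $\mathcal X_{eq}^{\mathrm{meas}}=\{E\in\mathcal X:\nu_{eq}(\pi_{\mathcal X}(B^{\mathcal X}_\epsilon(E)))>0\ \forall\epsilon>0\}$, $B^{\mathcal X}_\epsilon(E)$ the open $d_H$-ball in $\mathcal X$. *)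

From HB Require Import structures.
From mathcomp Require Import all_boot all_order all_algebra.
From mathcomp Require Import all_classical all_reals all_analysis.
Set Implicit Arguments.
Unset Strict Implicit.
Unset Printing Implicit Defensive.
Import Order.TTheory GRing.Theory Num.Theory.
Local Open Scope classical_set_scope.
Local Open Scope ring_scope.
Local Open Scope card_scope.

(* Pointed (i.e. nonempty, with a chosen point) metric spaces: needed only so
   that the Borel sigma-algebra <<s open >> yields a measurableType. *)
#[short(type="pmetricType")]
HB.structure Definition PMetric (K : numDomainType) :=
  { M of Metric K M & isPointed M }.

Definition borel (R : realType) (T : pmetricType R) :=
  g_sigma_algebraType (@open T).

Definition is_group (G : Type) (mul : G -> G -> G) (one : G) (inv : G -> G) :=
  [/\ forall a b c, mul a (mul b c) = mul (mul a b) c,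
      forall a, mul one a = a, forall a, mul a one = a,
      forall a, mul (inv a) a = one & forall a, mul a (inv a) = one].

Definition tds (R : realType) (G : Type) (mul : G -> G -> G) (one : G)
  (T : metricType R) (act : G -> T -> T) :=
  [/\ compact [set: T], forall g, continuous (act g),
      forall x, act one x = x &
      forall g h x, act (mul g h) x = act g (act h x)].

Definition minimal (R : realType) (G : Type) (T : metricType R)
  (act : G -> T -> T) :=
  forall A : set T, closed A -> A !=set0 ->
    (forall g, act g @` A `<=` A) -> A = [set: T].

Definition equicontinuous (R : realType) (G : Type) (T : metricType R)
  (act : G -> T -> T) :=
  forall eps : R, 0 < eps -> exists2 delta : R, 0 < delta &
    forall x y, mdist x y < delta -> forall g, mdist (act g x) (act g y) < eps.

Definition factor_map (R : realType) (G : Type) (T S : metricType R)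
  (actT : G -> T -> T) (actS : G -> S -> S) (p : T -> S) :=
  [/\ continuous p, forall s, exists t, p t = s &
      forall g t, p (actT g t) = actS g (p t)].

Definition max_eq_factor (R : realType) (G : Type) (mul : G -> G -> G)
  (one : G) (X Xeq : metricType R) (act : G -> X -> X)
  (acteq : G -> Xeq -> Xeq) (pieq : X -> Xeq) :=
  [/\ tds mul one acteq, equicontinuous acteq, factor_map act acteq pieq &
      forall (Y : metricType R) (actY : G -> Y -> Y) (psi : X -> Y),
        tds mul one actY -> equicontinuous actY -> factor_map act actY psi ->
        exists phi : Xeq -> Y,
          factor_map acteq actY phi /\ forall x, psi x = phi (pieq x)].

Definition pdist (R : realType) (T : metricType R) (x : T) (F : set T) : R :=
  inf [set mdist x y | y in F].
Definition hdist (R : realType) (T : metricType R) (E F : set T) : R :=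
  Num.max (sup [set pdist x F | x in E]) (sup [set pdist y E | y in F]).

Definition hyperspace (R : realType) (T : metricType R) (E : set T) :=
  closed E /\ E !=set0.

(* calX = closure in (2^X, d_H) of the fibres of pieq *)
Definition calX (R : realType) (X Y : metricType R) (p : X -> Y) (E : set X) :=
  hyperspace E /\
  forall eps : R, 0 < eps -> exists y : Y, hdist E (p @^-1` [set y]) < eps.

Definition calX_ball (R : realType) (X Y : metricType R) (p : X -> Y)
  (E : set X) (eps : R) : set (set X) :=
  [set F | calX p F /\ hdist E F < eps].

Definition pi_calX_img (R : realType) (X Y : metricType R) (p : X -> Y)
  (B : set (set X)) : set Y :=
  \bigcup_(F in B) (p @` F).

Definition calX_meas (R : realType) (X : metricType R) (Y : pmetricType R)
  (p : X -> Y) (nu : probability (borel Y) R) (E : set X) :=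
  calX p E /\
  forall eps : R, 0 < eps ->
    (0 < nu (pi_calX_img p (calX_ball p E eps) : set (borel Y)))%E.

Definition regular_to_one (R : realType) (X : metricType R) (Y : pmetricType R)
  (p : X -> Y) (nu : probability (borel Y) R) (K : nat) :=
  nu ([set y | p @^-1` [set y] #= `I_K] : set (borel Y)) = 1%E.

Definition invariant_measure (R : realType) (G : Type) (Y : pmetricType R)
  (actY : G -> Y -> Y) (nu : probability (borel Y) R) :=
  forall g (A : set (borel Y)), measurable A ->
    nu ((actY g @^-1` A) : set (borel Y)) = nu A.

(* Every element of calX is a closed subset of a single fibre of pi_eq, and
   the hyperspace of the compact space X is compact: along an ultrafilter,
   nonempty closed sets have a d_H-limit.  Hence the image under pi_calX of a
   d_H-ball of calX is a countable union of closed sets, and so is the set of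
   points whose fibre has at least m elements (m points pairwise 1/(n+1) apart,
   for some n); both are Borel.

   (3) If E had K+1 points pairwise c apart, every F in calX with
   d_H(E, F) < c/3 would carry K+1 points pairwise c/3 apart, and so would the
   fibre containing F.  The base points of these F form a set of positive
   measure, which must meet the full-measure set of K-point fibres.  (2) is the
   case K = 1, E being nonempty.

   (1) An invariant measure of a minimal system charges every nonempty open set,
   since countably many translates of it cover the space.  When pi_eq is open,
   y |-> pi_eq^-1(y) is d_H-continuous, so every fibre lies in calX^meas;
   conversely an element of calX is a closed subset of a fibre that nearby
   fibres approximate, hence the whole fibre. *)

From HB Require Import structures.
From mathcomp Require Import all_boot all_order all_algebra.
From mathcomp Require Import all_classical all_reals all_analysis.
From mathcomp Require Import lra.
Import Order.TTheory GRing.Theory Num.Theory.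
Import metricType_numDomainType.

Set Implicit Arguments.
Unset Strict Implicit.
Unset Printing Implicit Defensive.
Local Open Scope classical_set_scope.
Local Open Scope ring_scope.
Local Open Scope card_scope.

(** * Compact metric spaces *)

Lemma mdist_ball_open {R : realType} {X : metricType R} (x : X) (r : R) :
  open [set y | mdist x y < r].
Proof.
rewrite openE => y /= xy; rewrite /interior -filter_from_mdist_nbhs.
exists (r - mdist x y) => /= [|z yz]; first by rewrite subr_gt0.
by rewrite /= (le_lt_trans (metric_triangle _ y _)) // -ltrBrDl.
Qed.

Lemma nbhs_mdist_ball {R : realType} {X : metricType R} (x : X) (A : set X) :
  nbhs x A -> exists2 r, 0 < r & forall y, mdist x y < r -> A y.
Proof.
by rewrite -filter_from_mdist_nbhs => -[r r0 rA]; exists r => // y /rA.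
Qed.

Section compact_metric.
Context {R : realType} {X : metricType R}.
Hypothesis cptX : compact [set: X].

Lemma compact_finite_net r : 0 < r ->
  exists s : seq X, forall x, exists2 p, p \in s & mdist p x < r.
Proof.
move=> r0; apply: contrapT => no_net.
pose far (s : seq X) := [set x | forall p, p \in s -> r <= mdist p x].
have far_filter : ProperFilter (filter_from [set: seq X] far).
  apply: filter_from_proper; last first.
    move=> s _; apply: contrapT => far0; apply: no_net; exists s => x.
    apply: contrapT => x_far; apply: far0; exists x => p ps.
    by rewrite leNgt; apply/negP => px; apply: x_far; exists p.
  apply: filter_from_filter; first by exists [::].
  move=> s1 s2 _ _; exists (s1 ++ s2) => // x far_x.
  by split => p ps; apply: far_x; rewrite mem_cat ps ?orbT.
have [c [_ clc]] := cptX far_filter filterT.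
case: (clc (far [:: c]) [set y | mdist c y < r]).
- by exists [:: c].
- by rewrite -filter_from_mdist_nbhs; exists r.
- by move=> y [/(_ c (mem_head _ _))]; rewrite leNgt => /negP.
Qed.

Lemma compact_mdist_bounded : exists D : R, forall x y : X, mdist x y <= D.
Proof.
have [s net] := compact_finite_net ltr01.
pose M := \big[Num.max/0]_(p <- s) \big[Num.max/0]_(q <- s) mdist p q.
exists (2 + M) => x y; have [p ps px] := net x; have [q qs qy] := net y.
have pq : mdist p q <= M.
  by apply: (bigmax_sup_seq _ _ _ _ _ ps) => //; exact: le_bigmax_seq.
have := metric_triangle x p y; have := metric_triangle p q y.
rewrite metric_sym in px; lra.
Qed.

Lemma ultra_limit (I : Type) (U : set_system I) (x : I -> X) : UltraFilter U ->
  exists p, forall rho, 0 < rho -> U [set i | mdist p (x i) < rho].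
Proof.
move=> UU; have [p [_ clp]] := @cptX (x @ U) _ filterT.
exists p => rho rho0.
have [//|Uc] := in_ultra_setVsetC [set i | mdist p (x i) < rho] UU.
have := clp (~` [set y | mdist p y < rho]) [set y | mdist p y < rho] Uc.
case; first by rewrite -filter_from_mdist_nbhs; exists rho.
by move=> y [].
Qed.

End compact_metric.

(** * Point-set and Hausdorff distances *)

Section point_set_distance.
Context {R : realType} {X : metricType R}.
Implicit Types (x z : X) (F : set X) (c : R).

Lemma pdist_le x F z : F z -> pdist x F <= mdist x z.
Proof.
move=> Fz; apply: ge_inf; last by exists z.
by exists 0 => _ [w _ <-]; exact: mdist_ge0.
Qed.

Lemma pdist_lt_near x F c : F !=set0 -> pdist x F < c ->
  exists2 z, F z & mdist x z < c.
Proof.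
move=> [z Fz] /inf_lt[]; first by exists (mdist x z), z.
by move=> _ [w Fw <-]; exists w.
Qed.

Lemma pdist_ge x F c : F !=set0 -> (forall z, F z -> c <= mdist x z) ->
  c <= pdist x F.
Proof.
move=> [z Fz] cF; apply: lb_le_inf; first by exists (mdist x z), z.
by move=> _ [w Fw <-]; exact: cF.
Qed.

Lemma pdist_triangle x x' F : F !=set0 ->
  pdist x F <= mdist x x' + pdist x' F.
Proof.
move=> F0; rewrite -lerBlDl; apply: pdist_ge => // z Fz.
by rewrite lerBlDl (le_trans (pdist_le x Fz)) ?metric_triangle.
Qed.

End point_set_distance.

Section hausdorff_distance.
Context {R : realType} {X : metricType R}.
Hypothesis cptX : compact [set: X].
Implicit Types (x y : X) (E F H : set X) (c : R).

Lemma hdistC E F : hdist E F = hdist F E.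
Proof. by rewrite /hdist maxC. Qed.

Lemma pdist_le_hdistl E F x : F !=set0 -> E x -> pdist x F <= hdist E F.
Proof.
move=> [z Fz] Ex; rewrite /hdist le_max; apply/orP; left.
apply: ub_le_sup; last by exists x.
have [D mdist_le_D] := compact_mdist_bounded cptX.
by exists D => _ [w _ <-]; exact: le_trans (pdist_le w Fz) (mdist_le_D w z).
Qed.

Lemma pdist_le_hdistr E F y : E !=set0 -> F y -> pdist y E <= hdist E F.
Proof. by rewrite hdistC; exact: pdist_le_hdistl. Qed.

Lemma hdist_le E F c : E !=set0 -> F !=set0 ->
  (forall x, E x -> pdist x F <= c) -> (forall y, F y -> pdist y E <= c) ->
  hdist E F <= c.
Proof.
move=> [e Ee] [f Ff] EF FE; rewrite /hdist ge_max; apply/andP; split.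
  by apply: ge_sup; [exists (pdist e F), e | move=> _ [w Ew <-]; exact: EF].
by apply: ge_sup; [exists (pdist f E), f | move=> _ [w Fw <-]; exact: FE].
Qed.

Lemma hdist_le_near E F c : E !=set0 -> F !=set0 ->
  (forall x, E x -> exists2 z, F z & mdist x z <= c) ->
  (forall y, F y -> exists2 z, E z & mdist y z <= c) ->
  hdist E F <= c.
Proof.
move=> E0 F0 EF FE; apply: hdist_le => // x.
  by move=> /EF[z Fz xz]; exact: le_trans (pdist_le x Fz) xz.
by move=> /FE[z Ez xz]; exact: le_trans (pdist_le x Ez) xz.
Qed.

Lemma hdist_lt_nearl E F c x : F !=set0 -> E x -> hdist E F < c ->
  exists2 z, F z & mdist x z < c.
Proof.
move=> F0 Ex EFc; apply: pdist_lt_near => //.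
exact: le_lt_trans (pdist_le_hdistl F0 Ex) EFc.
Qed.

Lemma hdist_lt_nearr E F c y : E !=set0 -> F y -> hdist E F < c ->
  exists2 z, E z & mdist y z < c.
Proof. by rewrite hdistC; exact: hdist_lt_nearl. Qed.

Lemma hdist_triangle E F H : E !=set0 -> F !=set0 -> H !=set0 ->
  hdist E H <= hdist E F + hdist F H.
Proof.
move=> E0 F0 H0; apply: hdist_le => // x Ex.
- rewrite -lerBlDr; apply: le_trans (pdist_le_hdistl F0 Ex).
  apply: pdist_ge => // z Fz; rewrite lerBlDr.
  rewrite (le_trans (pdist_triangle x z H0))// lerD2l.
  exact: pdist_le_hdistl.
- rewrite addrC -lerBlDr; apply: le_trans (pdist_le_hdistr F0 Ex).
  apply: pdist_ge => // z Fz; rewrite lerBlDr.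
  rewrite (le_trans (pdist_triangle x z E0))// lerD2l.
  exact: pdist_le_hdistr.
Qed.

End hausdorff_distance.

(** * Hausdorff limits along ultrafilters *)

Lemma filter_all_mem (T : Type) (I : eqType) (F : set_system T) (s : seq I)
    (Q : I -> set T) : Filter F ->
  (forall p, p \in s -> F (Q p)) -> F [set t | forall p, p \in s -> Q p t].
Proof.
move=> FF; elim: s => [|a s IHs] FQ; first by apply: filterS filterT.
apply: filterS (filterI (FQ a (mem_head a s)) (IHs _)) => [t [Qa Qs] p|p ps].
  by rewrite in_cons => /predU1P[->|/Qs].
by apply: FQ; rewrite in_cons ps orbT.
Qed.

Section ultra_limit_set.
Context {R : realType} {X : metricType R} {I : Type}.
Hypothesis cptX : compact [set: X].
Variables (U : set_system I) (Phi : I -> set X).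
Hypothesis UU : UltraFilter U.
Hypothesis Phi0 : forall i, Phi i !=set0.

Definition ulim_set := [set x : X | forall rho, 0 < rho ->
  U [set i | exists2 z, Phi i z & mdist x z < rho]].

Lemma ulim_set_closed : closed ulim_set.
Proof.
move=> x clx r r0; have r2 : 0 < r / 2 by rewrite divr_gt0.
have [x' [Lx' xx']] : ulim_set `&` [set y | mdist x y < r / 2] !=set0.
  by apply: clx; rewrite -filter_from_mdist_nbhs; exists (r / 2).
apply: filterS (Lx' _ r2) => i [z Pz x'z]; exists z => //.
have := metric_triangle x x' z; rewrite /= in xx'; lra.
Qed.

Lemma Phi_near_ulim_set rho : 0 < rho ->
  U [set i | forall z, Phi i z -> exists2 x, ulim_set x & mdist z x < rho].
Proof.
move=> rho0; have [//|Ufar] := in_ultra_setVsetC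
  [set i | forall z, Phi i z -> exists2 x, ulim_set x & mdist z x < rho] UU.
pose far i z := Phi i z /\ forall x, ulim_set x -> rho <= mdist z x.
have pick_far i : exists z, Phi i z /\ ((exists z, far i z) -> far i z).
  have [[z fz]|no_far] := pselect (exists z, far i z).
    by exists z; split => //; case: fz.
  by have [z Pz] := Phi0 i; exists z; split => // /no_far.
have [zf zfP] := choice pick_far.
have [c zf_c] := ultra_limit cptX zf UU.
have Lc : ulim_set c.
  move=> r r0; apply: filterS (zf_c r r0) => i ci.
  by exists (zf i) => //; case: (zfP i).
have [i [/= not_near ci]] := filter_ex (filterI Ufar (zf_c rho rho0)).
have [z fz] : exists z, far i z.
  apply: contrapT => no_far; apply: not_near => z Pz; apply: contrapT => no_x.
  apply: no_far; exists z; split => // x Lx; rewrite leNgt.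
  by apply/negP => zx; apply: no_x; exists x.
have [_ /(_ c Lc)] := (zfP i).2 (ex_intro _ z fz).
by rewrite metric_sym leNgt ci.
Qed.

Lemma ulim_set_near_Phi rho : 0 < rho ->
  U [set i | forall x, ulim_set x -> exists2 z, Phi i z & mdist x z < rho].
Proof.
move=> rho0; have r3 : 0 < rho / 3 by rewrite divr_gt0.
have [s net] := compact_finite_net cptX r3.
pose near_L p := exists2 x, ulim_set x & mdist p x < rho / 3.
have pick_L p : exists x, near_L p -> ulim_set x /\ mdist p x < rho / 3.
  have [[x Lx px]|nLp] := pselect (near_L p); first by exists x.
  by exists p => /nLp.
have [xp xpP] := choice pick_L.
have : U [set i | forall p, p \in s -> near_L p ->
    exists2 z, Phi i z & mdist (xp p) z < rho / 3].
  apply: filter_all_mem => p _.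
  have [/[dup] /xpP[Lxp _] Lp|nLp] := pselect (near_L p).
    by apply: filterS (Lxp _ r3) => i xpz _.
  by apply: filterS filterT => i _ /nLp.
apply: filterS => i near_i x Lx.
have [p ps px] := net x.
have Lp : near_L p by exists x.
have [_ pxp] := xpP p Lp; have [z Pz xpz] := near_i p ps Lp.
exists z => //.
have := metric_triangle x p (xp p); have := metric_triangle x (xp p) z.
rewrite (metric_sym x p); lra.
Qed.

Lemma ulim_set_neq0 : ulim_set !=set0.
Proof.
have [i near_i] := filter_ex (Phi_near_ulim_set ltr01).
by have [z Pz] := Phi0 i; have [x Lx _] := near_i z Pz; exists x.
Qed.

Lemma ulim_set_hdist rho : 0 < rho -> U [set i | hdist ulim_set (Phi i) <= rho].
Proof.
move=> rho0.
apply: filterS (filterI (Phi_near_ulim_set rho0) (ulim_set_near_Phi rho0)).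
move=> i [Phi_near L_near].
apply: hdist_le_near; [exact: ulim_set_neq0|exact: Phi0| |].
  by move=> x /L_near[z Pz /ltW]; exists z.
by move=> z /Phi_near[x Lx /ltW]; exists x.
Qed.

End ultra_limit_set.

(** * Measurability in the base of a factor map *)

Section borel_sets.
Context {R : realType} {Y : pmetricType R}.

Lemma open_borel (A : set Y) : open A -> measurable (A : set (borel Y)).
Proof. exact: sub_sigma_algebra. Qed.

Lemma closed_borel (A : set Y) : closed A -> measurable (A : set (borel Y)).
Proof. by move/closed_openC/open_borel/measurableC; rewrite setCK. Qed.

End borel_sets.

Lemma archi_inv_lt (R : realType) (e : R) : 0 < e ->
  exists n : nat, n.+1%:R^-1 < e.
Proof.
move=> e0; have /archi_boundP : 0 <= e^-1 by rewrite invr_ge0 ltW.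
set n := Num.bound _ => en.
exists n; rewrite -(invrK e) ltf_pV2 ?posrE ?invr_gt0 ?ltr0Sn//.
by rewrite (lt_le_trans en)// ler_nat.
Qed.

Section fibres.
Context {R : realType} {X Y : metricType R}.
Variable p : X -> Y.
Hypothesis p_cont : continuous p.
Hypothesis p_surj : forall y, exists x, p x = y.
Hypothesis cptX : compact [set: X].

Lemma fibre_neq0 y : p @^-1` [set y] !=set0.
Proof. by have [x px] := p_surj y; exists x. Qed.

Lemma continuous_mdist z e : 0 < e -> exists2 d, 0 < d &
  forall z', mdist z z' < d -> mdist (p z) (p z') < e.
Proof.
move=> e0; have /cvgrPdist_lt/(_ e e0)/nbhs_mdist_ball[d d0 hd] := @p_cont z.
by exists d.
Qed.

Lemma graph_closure_eq z y :
    (forall rho, 0 < rho ->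
       exists2 z', mdist z z' < rho & mdist y (p z') < rho) ->
  p z = y.
Proof.
move=> near_zy; apply: mdist_positivity; apply/eqP.
rewrite eq_le mdist_ge0 andbT; apply/ler_addgt0Pl => e e0; rewrite addr0.
have e2 : 0 < e / 2 by rewrite divr_gt0.
have [d d0 dP] := continuous_mdist z e2.
have [|z' zz' yz'] := near_zy (Num.min d (e / 2)).
  by rewrite lt_min d0 e2.
move: zz' yz'; rewrite !lt_min => /andP[/dP zz' _] /andP[_ yz'].
have := metric_triangle (p z) (p z') y; rewrite (metric_sym y) in yz'; lra.
Qed.

Lemma calX_sub_fibre F z : calX p F -> F z -> F `<=` p @^-1` [set p z].
Proof.
move=> [[_ F0] pF] Fz w Fw; apply: graph_closure_eq => rho rho0.
have [d d0 dP] := continuous_mdist z rho0.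
have [|y Fy] := pF (Num.min d rho); first by rewrite lt_min d0 rho0.
have [z' yz' zz'] := hdist_lt_nearl cptX (fibre_neq0 y) Fz Fy.
have [w' yw' ww'] := hdist_lt_nearl cptX (fibre_neq0 y) Fw Fy.
move: zz' ww'; rewrite !lt_min => /andP[/dP zz' _] /andP[_ ww'].
by exists w' => //; rewrite [p w']yw' -[y]yz'.
Qed.

End fibres.

Section cardinality.
Context {T : Type}.
Implicit Types (A B : set T).

Lemma card_le_inj U A (B : set U) (f : T -> U) :
  set_fun A B f -> set_inj A f -> A #<= B.
Proof.
move=> fAB finj; have [g] : $|{injfun A >-> B}| by apply/injfunPex; exists f.
exact: inj_card_le.
Qed.

Lemma card_le_II_not_ge B K : B #<= `I_K <-> ~ (`I_K.+1 #<= B).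
Proof.
split=> [BK /card_le_trans/(_ BK)|not_ge]; first by rewrite card_le_II ltnn.
have [/finite_setP[n /card_eqPle[Bn nB]]|/infiniteP infB] :=
  pselect (finite_set B).
  have [nK|Kn] := leqP n K.
    by apply: card_le_trans Bn _; rewrite card_le_II.
  by exfalso; apply: not_ge; apply: card_le_trans nB; rewrite card_le_II.
by exfalso; apply: not_ge; exact: card_le_trans (card_leT _) infB.
Qed.

Lemma card_eq_I1 B : B !=set0 -> B #<= `I_1 -> B #= `I_1.
Proof.
move=> [b Bb] B1; apply/card_eqPle; split => //.
by rewrite -(card_le_eql (@card_set1 _ b)); apply: subset_card_le => _ ->.
Qed.

End cardinality.

Lemma card_II_le_fun (T : choiceType) (B : set T) (b : T) m : `I_m #<= B ->
  exists x : nat -> T, (forall i, (i < m)%N -> B (x i)) /\ set_inj `I_m x.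
Proof.
rewrite -card_le_some => /pcard_leP /injfunPex[f fB finj].
exists (fun i => odflt b (f i)); split => [i im|i j im jm /= xij].
  by have [c Bc <-] := fB i im.
apply: finj => //; have [c _ fic] := fB i (set_mem im).
by have [d _ fjd] := fB j (set_mem jm); move: xij; rewrite -fic -fjd /= => ->.
Qed.

Section separated_points.
Context {R : realType} {X : metricType R}.

Definition separated_on (A : set X) (m : nat) (c : R) (x : nat -> X) :=
  (forall i, (i < m)%N -> A (x i)) /\
  forall i j, (i < m)%N -> (j < m)%N -> i != j -> c <= mdist (x i) (x j).

Definition separated_points (A : set X) (m : nat) (c : R) :=
  exists x : nat -> X, separated_on A m c x.

Lemma card_le_separated (A : set X) m : A !=set0 ->
  `I_m #<= A <-> exists2 c, 0 < c & separated_points A m c.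
Proof.
move=> [a Aa].
split=> [/(card_II_le_fun a)[x [Ax x_inj]]|[c c0 [x [Ax x_sep]]]].
  pose c := \big[Order.min/1]_(q : 'I_m * 'I_m | q.1 != q.2 :> nat)
    mdist (x q.1) (x q.2).
  exists c.
    apply/bigmin_gtP; split => // -[i j] /= ij; rewrite mdist_gt0.
    by apply: contra ij => /eqP/x_inj -> //; rewrite in_setE /= ltn_ord.
  exists x; split => // i j im jm ij.
  exact: (@bigmin_le_cond _ _ _ _ (Ordinal im, Ordinal jm) _ _ ij).
apply: (card_le_inj Ax) => i j im jm xij; apply/eqP; apply: contraT => ij.
by have := x_sep i j (set_mem im) (set_mem jm) ij; rewrite xij mdistxx leNgt c0.
Qed.

Hypothesis cptX : compact [set: X].

Lemma separated_points_hdist (E F : set X) m c : F !=set0 ->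
  separated_points E m c -> hdist E F < c / 3 -> separated_points F m (c / 3).
Proof.
move=> [f Ff] [x [Ex x_sep]] EF.
have near_x i : exists w, (i < m)%N -> F w /\ mdist (x i) w < c / 3.
  have [im|_] := ltnP i m; last by exists f.
  have [w Fw xw] := hdist_lt_nearl cptX (ex_intro _ f Ff) (Ex i im) EF.
  by exists w.
have [w wP] := choice near_x.
exists w; split => [i /wP[]//|i j im jm ij].
have [_ xwi] := wP i im; have [_ xwj] := wP j jm; have := x_sep i j im jm ij.
have := metric_triangle (x i) (w j) (x j).
have := metric_triangle (x i) (w i) (w j).
rewrite (metric_sym (w j)); lra.
Qed.

End separated_points.

Section fibre_measurability.
Context {R : realType} {X : metricType R} {Y : pmetricType R}.
Variable p : X -> Y.
Hypothesis p_cont : continuous p.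
Hypothesis p_surj : forall y, exists x, p x = y.
Hypothesis cptX : compact [set: X].

Let fibre0 := fibre_neq0 p_surj.

Lemma ultra_refine_closure (A : set Y) y : closure A y ->
  exists U : set_system Y, [/\ UltraFilter U, U A &
    forall r, 0 < r -> U [set y' | mdist y y' < r]].
Proof.
move=> Ay; have [U [UU nearU]] := ultraFilterLemma (within_nbhs_proper Ay).
exists U; split => // [|r r0]; first by apply: nearU; exact: withinT.
apply: nearU; rewrite /within -filter_from_mdist_nbhs.
by exists r => // y' yy' _.
Qed.

Section calX_ball_image.
Variable E : set X.
Hypothesis E0 : E !=set0.

Let fibres_near r := [set y : Y | hdist E (p @^-1` [set y]) < r].

Lemma calX_closure_fibres_near F z r : calX p F -> F z -> hdist E F < r ->
  closure (fibres_near r) (p z).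
Proof.
move=> calF Fz EF B /nbhs_mdist_ball[rho rho0 ballB].
have F0 : F !=set0 by exists z.
have [d d0 dP] := continuous_mdist p_cont z rho0.
have [|y Fy] := calF.2 (Order.min d (r - hdist E F)).
  by rewrite lt_min d0 subr_gt0.
have [z' yz' zz'] := hdist_lt_nearl cptX (fibre0 y) Fz Fy.
move: Fy zz'; rewrite !lt_min => /andP[_ Fy] /andP[/dP zz' _].
exists y; split; last by apply: ballB; rewrite /= -[y]yz'.
have := hdist_triangle cptX E0 F0 (fibre0 y); rewrite /fibres_near /=; lra.
Qed.

Lemma closure_fibres_near_calX r y : closure (fibres_near r) y ->
  exists F, [/\ calX p F, hdist E F <= r & F `<=` p @^-1` [set y]].
Proof.
move=> /ultra_refine_closure[U [UU U_near U_y]].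
pose L := ulim_set U (fun y' => p @^-1` [set y']).
have L_hdist := ulim_set_hdist cptX UU fibre0.
have L0 : L !=set0 := ulim_set_neq0 cptX UU fibre0.
exists L; split.
- split; first by split; [exact: ulim_set_closed|].
  move=> e e0; have [|y' /= Ly'] := filter_ex (L_hdist (e / 2) _).
    by rewrite divr_gt0.
  by exists y'; lra.
- apply/ler_addgt0Pr => k k0.
  have [y' [/= Ly' Ey']] := filter_ex (filterI (L_hdist k k0) U_near).
  have := hdist_triangle cptX E0 (fibre0 y') L0.
  rewrite (hdistC (p @^-1` [set y'])) /fibres_near /= in Ey' *; lra.
- move=> z Lz /=; apply: (graph_closure_eq p_cont) => rho rho0.
  have rho2 : 0 < rho / 2 by rewrite divr_gt0.
  have [y' [/= Ly' yy']] := filter_ex (filterI (L_hdist _ rho2) (U_y _ rho0)).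
  have Ly'_rho : hdist L (p @^-1` [set y']) < rho by lra.
  have [z' /= yz' zz'] := hdist_lt_nearl cptX (fibre0 y') Lz Ly'_rho.
  by exists z' => //; rewrite yz'.
Qed.

Lemma calX_ball_image_measurable eps :
  measurable (pi_calX_img p (calX_ball p E eps) : set (borel Y)).
Proof.
suff -> : pi_calX_img p (calX_ball p E eps) =
    \bigcup_n closure (fibres_near (eps - n.+1%:R^-1)).
  by apply: bigcupT_measurable => n; apply: closed_borel; exact: closed_closure.
apply/seteqP; split => [_ [F [calF EF] [z Fz <-]]|y [n _]].
  have [|n n_lt] := @archi_inv_lt _ (eps - hdist E F).
    by rewrite subr_gt0.
  exists n => //; apply: calX_closure_fibres_near calF Fz _.
  by rewrite ltrBrDl -ltrBrDr.
move=> /closure_fibres_near_calX[F [calF EF Fy]].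
have [z Fz] := calF.1.2; exists F; last by exists z => //; exact: Fy.
split => //; apply: le_lt_trans EF _.
by rewrite ltrBlDr ltrDl invr_gt0 ltr0Sn.
Qed.

End calX_ball_image.

Lemma separated_fibres_closed m c :
  closed [set y : Y | separated_points (p @^-1` [set y]) m c].
Proof.
move=> y /ultra_refine_closure[U [UU U_sep U_y]].
have pick y' : exists x, separated_points (p @^-1` [set y']) m c ->
    separated_on (p @^-1` [set y']) m c x.
  have [[x sep]|no_sep] := pselect (separated_points (p @^-1` [set y']) m c).
    by exists x.
  by have [z _] := fibre0 y'; exists (fun=> z) => /no_sep.
have [xf xfP] := choice pick.
have [lim limP] := choice (fun i => ultra_limit cptX (xf^~ i) UU).
exists lim; split => [i im|i j im jm ij].
  apply: (graph_closure_eq p_cont) => rho rho0.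
  have [y' [[/= li yy'] sep]] :=
    filter_ex (filterI (filterI (limP i rho rho0) (U_y rho rho0)) U_sep).
  by exists (xf y' i) => //; rewrite ((xfP y' sep).1 i im).
rewrite leNgt; apply/negP => lim_ij.
have g0 : 0 < (c - mdist (lim i) (lim j)) / 2 by rewrite divr_gt0 // subr_gt0.
have [y' [[/= li lj] sep]] :=
  filter_ex (filterI (filterI (limP i _ g0) (limP j _ g0)) U_sep).
have := (xfP y' sep).2 i j im jm ij.
have := metric_triangle (xf y' i) (lim i) (xf y' j).
have := metric_triangle (lim i) (lim j) (xf y' j).
rewrite (metric_sym (xf y' i) (lim i)); lra.
Qed.

Lemma fibre_card_ge_measurable m :
  measurable ([set y | `I_m #<= p @^-1` [set y]] : set (borel Y)).
Proof.
suff -> : [set y | `I_m #<= p @^-1` [set y]] =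
    \bigcup_n [set y | separated_points (p @^-1` [set y]) m n.+1%:R^-1].
  apply: bigcupT_measurable => n; apply: closed_borel.
  exact: separated_fibres_closed.
apply/seteqP; split => y /=; rewrite (card_le_separated _ (fibre0 y)).
  move=> [c c0 [x [px x_sep]]]; have [n nc] := archi_inv_lt c0.
  exists n => //; exists x; split => // i j im jm ij.
  exact: le_trans (ltW nc) (x_sep i j im jm ij).
by move=> [n _ sep]; exists n.+1%:R^-1 => //; rewrite invr_gt0 ltr0Sn.
Qed.

Lemma fibre_card_eq_measurable K :
  measurable ([set y | p @^-1` [set y] #= `I_K] : set (borel Y)).
Proof.
suff -> : [set y | p @^-1` [set y] #= `I_K] =
    [set y | `I_K #<= p @^-1` [set y]] `&`
    ~` [set y | `I_K.+1 #<= p @^-1` [set y]].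
  apply: measurableI; first exact: fibre_card_ge_measurable.
  exact: measurableC (fibre_card_ge_measurable _).
apply/seteqP; split => y /=.
  by move=> /card_eqPle[fibK Kfib]; split => //; exact/card_le_II_not_ge.
by move=> [Kfib fibK]; apply/card_eqPle; split => //; exact/card_le_II_not_ge.
Qed.

End fibre_measurability.

(** * Invariant measures of minimal systems *)

Section invariant_measure_support.
Context {R : realType} {G : countType} (mul : G -> G -> G) (one : G).

Lemma factor_minimal {X Y : metricType R} (act : G -> X -> X)
    (actY : G -> Y -> Y) (p : X -> Y) :
  factor_map act actY p -> minimal act -> minimal actY.
Proof.
move=> [p_cont p_surj p_equiv] minX A clA [a Aa] A_inv.
have pA : p @^-1` A = setT.
  apply: minX; first by apply: preimage_closed => // x _; exact: p_cont.
    by have [x px] := p_surj a; exists x; rewrite /= px.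
  by move=> g _ [x Ax <-]; rewrite /= p_equiv; apply: (A_inv g); exists (p x).
apply/seteqP; split => // y _; have [x <-] := p_surj y.
by rewrite -[A (p x)]/((p @^-1` A) x) pA.
Qed.

Variables (Y : pmetricType R) (actY : G -> Y -> Y).
Hypothesis tdsY : tds mul one actY.
Hypothesis minY : minimal actY.

Lemma minimal_translates_cover (U : set Y) : open U -> U !=set0 ->
  \bigcup_g (actY g @^-1` U) = setT.
Proof.
have [_ act_cont act_one act_mul] := tdsY.
move=> oU [u Uu]; pose W := \bigcup_g (actY g @^-1` U).
have oW : open W by apply: bigcup_open => g _; exact: open_comp.
apply: contrapT => WnT.
have WC : ~` W = setT.
  apply: minY; first by rewrite closedC.
    apply: contrapT => W0; apply: WnT; apply/seteqP; split => // y _.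
    by apply: contrapT => Wy; apply: W0; exists y.
  move=> h _ [y Wy <-] [g _ /= Ug]; apply: Wy; exists (mul g h) => //.
  by rewrite /= act_mul.
have : (~` W) u by rewrite WC.
by apply; exists one => //; rewrite /= act_one.
Qed.

Variable nu : probability (borel Y) R.
Hypothesis nu_inv : invariant_measure actY nu.

Lemma invariant_measure_open_gt0 (U : set Y) : open U -> U !=set0 ->
  (0 < nu U)%E.
Proof.
have [_ act_cont _ _] := tdsY.
move=> oU U0; rewrite lt0e measure_ge0 andbT; apply/eqP => nuU0.
pose V n : set (borel Y) :=
  if unpickle n is Some g then actY g @^-1` U else set0.
have mV n : measurable (V n).
  rewrite /V; case: (unpickle n) => [g|//]; apply: open_borel.
  exact: open_comp.
have : (nu setT <= \sum_(n <oo) nu (V n))%E.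
  apply: (measure_sigma_subadditive _ mV measurableT) => y _.
  have : (\bigcup_g (actY g @^-1` U)) y by rewrite minimal_translates_cover.
  by case=> g _ Ug; exists (pickle g) => //; rewrite /V pickleK.
rewrite probability_setT eseries0 ?lee_fin ?ler10// => n _ _.
rewrite /V; case: (unpickle n) => [g|]; last exact: measure0.
by rewrite nu_inv //; exact: open_borel.
Qed.

End invariant_measure_support.

(** * Cardinality of the elements of calX^meas *)

Lemma probability_meets_full {d} {T : measurableType d} {R : realType}
    (P : probability T R) (A S : set T) :
  measurable A -> measurable S -> P S = 1%E -> (0 < P A)%E -> A `&` S !=set0.
Proof.
move=> mA mS PS1 PA0; apply: contrapT => AS0.
have : (P A <= P (~` S))%E.
  apply: le_measure; rewrite ?inE //; first exact: measurableC.
  by move=> x Ax Sx; apply: AS0; exists x.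
by rewrite probability_setC // PS1 subee // leNgt PA0.
Qed.

Section calX_meas_cardinality.
Context {R : realType} {X : metricType R} {Y : pmetricType R}.
Variable p : X -> Y.
Hypothesis p_cont : continuous p.
Hypothesis p_surj : forall y, exists x, p x = y.
Hypothesis cptX : compact [set: X].
Variable nu : probability (borel Y) R.

Lemma calX_meas_card_le K : regular_to_one p nu K ->
  forall E, calX_meas p nu E -> E #<= `I_K.
Proof.
move=> regK E [calE nu_ball]; have [[_ E0] _] := calE.
apply/card_le_II_not_ge => /(card_le_separated _ E0)[c c0 sepE].
have c3 : 0 < c / 3 by rewrite divr_gt0.
have [y [[F [calF EF] [z Fz pz]] /card_eqPle[fibK _]]] :=
  probability_meets_full (calX_ball_image_measurable p_cont p_surj cptX E0 _)
    (fibre_card_eq_measurable p_cont p_surj cptX K) regK (nu_ball _ c3).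
have [x [Fx x_sep]] := separated_points_hdist cptX (ex_intro _ z Fz) sepE EF.
move/card_le_II_not_ge: fibK; apply.
apply/(card_le_separated _ (fibre_neq0 p_surj y)).
exists (c / 3) => //; exists x; split => // i iK; rewrite /= -pz.
exact: (calX_sub_fibre p_cont p_surj cptX calF Fz (Fx i iK)).
Qed.

Lemma calX_meas_card_eq1 : regular_to_one p nu 1 ->
  forall E, calX_meas p nu E -> E #= `I_1.
Proof.
move=> reg1 E measE; apply: card_eq_I1.
  by case: measE => [[[_ E0] _] _].
exact: calX_meas_card_le reg1 E measE.
Qed.

End calX_meas_cardinality.

(** * Open factor maps *)

Section open_factor.
Context {R : realType} {X : metricType R} {Y : pmetricType R}.
Variable p : X -> Y.
Hypothesis p_cont : continuous p.
Hypothesis p_surj : forall y, exists x, p x = y.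
Hypothesis cptX : compact [set: X].

Let fibre0 := fibre_neq0 p_surj.

Lemma fibre_calX y : calX p (p @^-1` [set y]).
Proof.
split; first split; last 1 first.
- move=> e e0; exists y; apply: le_lt_trans e0.
  apply: hdist_le_near (fibre0 y) (fibre0 y) _ _ => x fx;
    by exists x; rewrite ?mdistxx.
- apply: preimage_closed => [x _|]; first exact: p_cont.
  by apply: compact_closed; [exact: metric_hausdorff|exact: compact_set1].
- exact: fibre0.
Qed.

Lemma fibres_upper_near y eps : 0 < eps -> nbhs y [set y' |
  forall x', p x' = y' -> exists2 x, p x = y & mdist x x' < eps].
Proof.
move=> eps0.
pose K := ~` \bigcup_(x in p @^-1` [set y]) [set x' | mdist x x' < eps].
have clK : closed K.
  by rewrite closedC; apply: bigcup_open => x _; exact: mdist_ball_open.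
have cpK : compact (p @` K).
  apply: continuous_compact; first exact: continuous_subspaceT.
  exact: subclosed_compact clK cptX (@subsetT _ K).
have : nbhs y (~` (p @` K)).
  apply: (@open_nbhs_nbhs _ _ (_ : set Y)); split.
    apply: closed_openC; apply: compact_closed cpK.
    exact: metric_hausdorff.
  by move=> [x Kx pxy]; apply: Kx; exists x => //=; rewrite mdistxx.
apply: filterS => y' not_pK x' px'.
have : ~ K x' by move=> Kx'; apply: not_pK; exists x'.
by move/contrapT => [x /= pxy xx']; exists x.
Qed.

Hypothesis p_open : forall U : set X, open U -> open (p @` U).

Lemma fibres_lower_near y eps : 0 < eps -> nbhs y [set y' |
  forall x, p x = y -> exists2 x', p x' = y' & mdist x x' < eps].
Proof.
move=> eps0; have e3 : 0 < eps / 3 by rewrite divr_gt0.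
have [s net] := compact_finite_net cptX e3.
pose near_fibre q := exists2 x, p x = y & mdist q x < eps / 3.
have pick q : exists x, near_fibre q -> p x = y /\ mdist q x < eps / 3.
  have [[x px qx]|no_x] := pselect (near_fibre q); first by exists x.
  by exists q => /no_x.
have [xq xqP] := choice pick.
have : nbhs y [set y' | forall q, q \in s -> near_fibre q ->
    exists2 w, mdist (xq q) w < eps / 3 & p w = y'].
  apply: filter_all_mem => q _.
  have [/xqP[pxq _]|no_x] := pselect (near_fibre q); last first.
    by apply: filterS filterT => y' _ /no_x.
  have : nbhs y (p @` [set w | mdist (xq q) w < eps / 3]).
    apply: open_nbhs_nbhs; split; first exact/p_open/mdist_ball_open.
    by exists (xq q) => //=; rewrite mdistxx.
  by apply: filterS => y' [w qw <-] _; exists w.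
apply: filterS => y' near_y' x px; have [q qs qx] := net x.
have near_q : near_fibre q by exists x.
have [w qw pw] := near_y' q qs near_q; have [_ qxq] := xqP q near_q.
exists w => //.
have := metric_triangle x q (xq q); have := metric_triangle x (xq q) w.
rewrite (metric_sym x q); lra.
Qed.

Lemma fibre_hdist_near y eps : 0 < eps -> exists2 s, 0 < s & forall y',
  mdist y y' < s -> hdist (p @^-1` [set y]) (p @^-1` [set y']) < eps.
Proof.
move=> eps0; have e2 : 0 < eps / 2 by rewrite divr_gt0.
have [s s0 near_y] :=
  nbhs_mdist_ball (filterI (fibres_upper_near y e2) (fibres_lower_near y e2)).
exists s => // y' yy'.
have [upper lower] := near_y y' yy'.
apply: (@le_lt_trans _ _ (eps / 2)); last by lra.
apply: hdist_le_near (fibre0 y) (fibre0 y') _ _.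
  by move=> x /lower[x' px' /ltW]; exists x'.
by move=> x' /upper[x px xx']; exists x => //; rewrite metric_sym ltW.
Qed.

Lemma calX_open_fibre E z : calX p E -> E z -> E = p @^-1` [set p z].
Proof.
move=> calE Ez; have [[clE E0] E_near] := calE.
apply/seteqP; split; first exact: (calX_sub_fibre p_cont p_surj cptX calE Ez).
move=> w /= pw; apply: clE => B /nbhs_mdist_ball[r r0 ballB].
have r2 : 0 < r / 2 by rewrite divr_gt0.
have [s s0 fibre_near] := fibre_hdist_near (p z) r2.
have [d d0 dP] := continuous_mdist p_cont z s0.
have [|y Ey] := E_near (Order.min d (r / 2)); first by rewrite lt_min d0 r2.
have [z' /= yz' zz'] := hdist_lt_nearl cptX (fibre0 y) Ez Ey.
have /fibre_near zy : mdist (p z) y < s.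
  by rewrite -yz'; apply: dP; move: zz'; rewrite lt_min => /andP[].
have [w' yw' ww'] :=
  hdist_lt_nearl cptX (fibre0 y) (pw : (p @^-1` [set p z]) w) zy.
have [e Ee w'e] := hdist_lt_nearr cptX E0 yw' Ey.
exists e; split => //; apply: ballB; move: w'e; rewrite lt_min => /andP[_ w'e].
have := metric_triangle w w' e; rewrite /=; lra.
Qed.

Variable nu : probability (borel Y) R.
Hypothesis nu_open_gt0 : forall U : set Y, open U -> U !=set0 -> (0 < nu U)%E.

Lemma fibre_calX_meas y : calX_meas p nu (p @^-1` [set y]).
Proof.
split => [|eps eps0]; first exact: fibre_calX.
have [s s0 fibre_near] := fibre_hdist_near y eps0.
apply: (@lt_le_trans _ _ (nu [set y' | mdist y y' < s])).
  by apply: nu_open_gt0; [exact: mdist_ball_open|exists y; rewrite /= mdistxx].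
apply: le_measure; rewrite ?inE.
- exact: open_borel (mdist_ball_open y s).
- exact: (calX_ball_image_measurable p_cont p_surj cptX (fibre0 y)).
- move=> y' /fibre_near yy'; exists (p @^-1` [set y']).
    by split; [exact: fibre_calX|].
  by have [x px] := fibre0 y'; exists x.
Qed.

Lemma calX_meas_open_factor :
  calX_meas p nu = [set p @^-1` [set y] | y in [set: Y]].
Proof.
apply/seteqP; split => [E [calE _]|_ [y _ <-]]; last exact: fibre_calX_meas.
have [[_ [z Ez]] _] := calE.
by exists (p z) => //; rewrite -(calX_open_fibre calE Ez).
Qed.

End open_factor.

Theorem lemma3p3 (R : realType)
  (G : countType) (mul : G -> G -> G) (one : G) (inv : G -> G)
  (HG : is_group mul one inv) (Ginf : ~ finite_set [set: G])
  (X : metricType R) (act : G -> X -> X)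
  (Htds : tds mul one act) (Hmin : minimal act)
  (Xeq : pmetricType R) (acteq : G -> Xeq -> Xeq) (pieq : X -> Xeq)
  (Hmef : max_eq_factor mul one act acteq pieq)
  (nueq : probability (borel Xeq) R)
  (Hinv : invariant_measure acteq nueq)
  (Huniq : forall mu : probability (borel Xeq) R,
      invariant_measure acteq mu ->
      forall A : set (borel Xeq), measurable A -> mu A = nueq A) :
  [/\ (forall U : set X, open U -> open (pieq @` U)) ->
        calX_meas pieq nueq = [set pieq @^-1` [set y] | y in [set: Xeq]],
      regular_to_one pieq nueq 1 ->
        forall E, calX_meas pieq nueq E -> E #= `I_1 &
      forall K : nat, regular_to_one pieq nueq K ->
        forall E, calX_meas pieq nueq E -> E #<= `I_K ].
Proof.
have [cptX _ _ _] := Htds.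
have [tdsXeq _ pieq_factor _] := Hmef.
have [pieq_cont pieq_surj _] := pieq_factor.
have nueq_open_gt0 := invariant_measure_open_gt0 tdsXeq
  (factor_minimal pieq_factor Hmin) Hinv.
split.
- move=> pieq_open.
  exact: (calX_meas_open_factor pieq_cont pieq_surj cptX pieq_open
    nueq_open_gt0).
- exact: calX_meas_card_eq1 pieq_cont pieq_surj cptX nueq.
- exact: calX_meas_card_le pieq_cont pieq_surj cptX nueq.
Qed.
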